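(* Let $S = R\cup B$ be a finite set of points in the plane in general position (no three collinear), colored red ($R$) and blue ($B$), such that $R$ and $B$ are not linearly separable, $CH(B)\subset CH(R)$, $|R| = 3$ and $|B|\ge 2$. Then $S$ contains a balanced convex $4$-hole if and only if there is an edge $\overline{uv}$ of $CH(B)$ (with $u,v\in B$) such that one of the two open half-planes bounded by the line through $u$ and $v$ contains exactly two red points and no blue point.
   Context: A $4$-hole of $S$ is a simple quadrilateral with vertices in $S$ and no point of $S$ in its interior; it is convex if the quadrilateral is convex, and balanced if it has exactly two red and two blue vertices. $CH(X)$ denotes the convex hull of $X$. $R$ and $B$ are linearly separable if some line has all of $R$ strictly on one side and all of $B$ strictly on the other. *)

From HB Require Import structures.
From mathcomp Require Import all_boot all_order all_algebra.
Set Implicit Arguments. Unset Strict Implicit. Unset Printing Implicit Defensive.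
Import Order.TTheory GRing.Theory Num.Theory.
Local Open Scope ring_scope.

Definition pt (R : realFieldType) := (R * R)%type.

Section Geom.
Variable R : realFieldType.
Implicit Types p q r x : pt R.

(* orientation determinant: > 0 iff p, q, r are in counterclockwise order *)
Definition orient p q r : R :=
  (q.1 - p.1) * (r.2 - p.2) - (q.2 - p.2) * (r.1 - p.1).

Definition general_position (S : seq (pt R)) : Prop :=
  forall p q r, p \in S -> q \in S -> r \in S ->
    p != q -> q != r -> p != r -> orient p q r != 0.

Definition lin_separable (Rs Bs : seq (pt R)) : Prop :=
  exists a b c : R, (a != 0 \/ b != 0) /\
    (forall p, p \in Rs -> a * p.1 + b * p.2 < c) /\
    (forall p, p \in Bs -> a * p.1 + b * p.2 > c).

Definition in_hull (P : seq (pt R)) x : Prop :=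
  exists w : nat -> R, (forall i, 0 <= w i) /\
    \sum_(i < size P) w i = 1 /\
    x.1 = \sum_(i < size P) w i * (nth x P i).1 /\
    x.2 = \sum_(i < size P) w i * (nth x P i).2.

Definition convex_quad a b c d : Prop :=
  0 < orient a b c /\ 0 < orient b c d /\ 0 < orient c d a /\ 0 < orient d a b.

Definition in_quad_interior a b c d x : Prop :=
  0 < orient a b x /\ 0 < orient b c x /\ 0 < orient c d x /\ 0 < orient d a x.

Definition has_balanced_convex_4hole (Rs Bs : seq (pt R)) : Prop :=
  exists a b c d,
    [/\ a \in Rs ++ Bs, b \in Rs ++ Bs, c \in Rs ++ Bs & d \in Rs ++ Bs] /\
    convex_quad a b c d /\
    count (mem Rs) [:: a; b; c; d] = 2%N /\
    count (mem Bs) [:: a; b; c; d] = 2%N /\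
    (forall x, x \in Rs ++ Bs -> ~ in_quad_interior a b c d x).

Definition hull_edge (Bs : seq (pt R)) u v : Prop :=
  [/\ u \in Bs, v \in Bs, u != v &
    (forall w, w \in Bs -> w != u -> w != v -> 0 < orient u v w) \/
    (forall w, w \in Bs -> w != u -> w != v -> orient u v w < 0)].

(* the open half-plane of line uv selected by sign s (s = 1 : left, s = -1 :
   right) contains exactly two points of Rs and no point of Bs *)
Definition halfplane_two_red_no_blue (Rs Bs : seq (pt R)) u v (s : R) : Prop :=
  count (fun p => 0 < s * orient u v p) Rs = 2%N /\
  (forall p, p \in Bs -> ~ (0 < s * orient u v p)).

End Geom.

From HB Require Import structures.
From mathcomp Require Import all_boot all_order all_algebra.
From mathcomp Require Import ring.
Set Implicit Arguments. Unset Strict Implicit. Unset Printing Implicit Defensive.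
Import Order.TTheory GRing.Theory Num.Theory.
Local Open Scope ring_scope.

(* Since |R| = 3, for any two red points all red points, hence (as CH(B) is
   inside CH(R)) all blue points, lie on one closed side of the line through
   them.  This rules out a balanced convex 4-hole whose red vertices are
   opposite, and puts every blue point strictly left of the red edge r1 r2 of a
   hole r1 r2 b1 b2.  Let t be the first blue point met when the ray r1 r2 turns
   towards the blue points, and t v the edge of CH(B) at t with CH(B) on its
   right.  If r2 is left of t v, then so is r1 but not the third red point
   (t lies in CH(R)), and t v is the required edge.  Otherwise a
   Grassmann-Pluecker computation puts t inside the hole.  Conversely, if the
   open side of u v contains exactly the red points r1, r2 and no blue point,
   then u v r1 r2 (in suitable order) is a balanced convex 4-hole, its interior
   lying in that side. *)

Section Orientation.
Variable R : realFieldType.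
Implicit Types a b c d o p q x y z : pt R.

Lemma orient_cycle a b c : orient a b c = orient b c a.
Proof. by rewrite /orient; ring. Qed.

Lemma orient_swap23 a b c : orient a c b = - orient a b c.
Proof. by rewrite /orient; ring. Qed.

Lemma orient_swap12 a b c : orient b a c = - orient a b c.
Proof. by rewrite /orient; ring. Qed.

Lemma orient_aab a b : orient a a b = 0.
Proof. by rewrite /orient; ring. Qed.

Lemma orient_aba a b : orient a b a = 0.
Proof. by rewrite /orient; ring. Qed.

Lemma orient_abb a b : orient a b b = 0.
Proof. by rewrite /orient; ring. Qed.

Lemma orient_plucker o a b c d :
  orient o a b * orient o c d = orient o a c * orient o b d - orient o a d * orient o b c.
Proof. by rewrite /orient; ring. Qed.

Lemma orient_trans (s : R) c d x y z :
  0 < s * orient c d x -> 0 < s * orient c d y -> 0 < s * orient c d z ->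
  0 < orient c x y -> 0 < orient c y z -> 0 < orient c x z.
Proof.
move=> dx dy dz xy yz; rewrite -(pmulr_rgt0 _ dy) -mulrA orient_plucker.
rewrite (orient_swap23 c x y) mulrN opprK mulrDr !mulrA.
by apply: addr_gt0; apply: mulr_gt0.
Qed.

Lemma orient_wedge_gt0 o p q t d :
  0 < orient o p q -> 0 < orient o p t -> 0 < orient o t q ->
  0 < orient o d p -> 0 < orient o d q -> 0 < orient o d t.
Proof.
move=> pq pt tq dp dq; rewrite -(pmulr_rgt0 _ pq) orient_plucker subr_gt0.
rewrite (orient_swap23 o d p) (orient_swap23 o t q) (orient_swap23 o d q).
apply: (lt_trans (y := 0)); first by rewrite pmulr_rlt0 // oppr_lt0.
by rewrite nmulr_rgt0 ?oppr_lt0.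
Qed.

Lemma in_quad_interior_of_wedges r1 r2 b1 b2 t :
  convex_quad r1 r2 b1 b2 -> 0 < orient r1 r2 t ->
  0 < orient r1 t b1 -> 0 < orient r1 t b2 -> orient r2 t b1 < 0 ->
  in_quad_interior r1 r2 b1 b2 t.
Proof.
move=> [r12b1 [r2b12 [b12r1 _]]] r12t r1tb1 r1tb2 r2tb1.
have r2b1t : 0 < orient r2 b1 t by rewrite orient_swap23 oppr_gt0.
split=> //; split=> //; split; last by rewrite orient_cycle.
apply: (orient_wedge_gt0 (p := r1) (q := r2)).
- by rewrite orient_cycle.
- by rewrite orient_cycle.
- by rewrite -orient_cycle.
- exact: b12r1.
- by rewrite -orient_cycle.
Qed.

Lemma in_hull_mem (P : seq (pt R)) x : x \in P -> in_hull P x.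
Proof.
move=> xP; pose k := index x P.
have pick (F : nat -> R) : \sum_(i < size P) (i == k :> nat)%:R * F i = F k.
  rewrite (eq_bigr (fun i : 'I_ _ => if i == k :> nat then F i else 0)).
    by rewrite -big_mkcond big_ord1_eq index_mem xP.
  by move=> i _; rewrite mulr_natl mulrb.
exists (fun i => (i == k)%:R); split=> [i|]; first exact: ler0n.
split; first by have := pick (fun=> 1); under eq_bigr do rewrite mulr1.
by rewrite (pick (fun i => (nth x P i).1)) (pick (fun i => (nth x P i).2)) nth_index.
Qed.

Lemma in_hull_orientE (P : seq (pt R)) p q x : in_hull P x ->
  exists w : nat -> R, [/\ forall i, 0 <= w i, \sum_(i < size P) w i = 1 &
    orient p q x = \sum_(i < size P) w i * orient p q (nth x P i)].
Proof.
case=> w [w_ge0 [w_sum [x1 x2]]]; exists w; split => //.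
pose c := (q.2 - p.2) * p.1 - (q.1 - p.1) * p.2.
have aff y : orient p q y = (p.2 - q.2) * y.1 + (q.1 - p.1) * y.2 + c.
  by rewrite /orient /c; ring.
rewrite aff x1 x2 -[c]mul1r -w_sum !mulr_sumr mulr_suml -!big_split.
by apply: eq_bigr => i _ /=; rewrite aff; ring.
Qed.

Lemma in_hull_orient_ge0 (P : seq (pt R)) p q x : in_hull P x ->
  {in P, forall y, 0 <= orient p q y} -> 0 <= orient p q x.
Proof.
case/(in_hull_orientE p q) => w [w_ge0 _ ->] P_ge0.
by apply: sumr_ge0 => i _; rewrite mulr_ge0 ?P_ge0 ?mem_nth.
Qed.

Lemma in_hull_orient_gt0 (P : seq (pt R)) p q x : in_hull P x ->
  {in P, forall y, 0 < orient p q y} -> 0 < orient p q x.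
Proof.
case/(in_hull_orientE p q) => w [w_ge0 w_sum ->] P_gt0.
have f_gt0 (i : 'I_(size P)) : 0 < orient p q (nth x P i) by rewrite P_gt0 ?mem_nth.
have wf_ge0 (i : 'I_(size P)) : true -> 0 <= w i * orient p q (nth x P i).
  by move=> _; apply: mulr_ge0 => //; apply: ltW.
rewrite lt_def sumr_ge0 // andbT; apply/eqP => /(psumr_eq0P wf_ge0) wf0.
suff : \sum_(i < size P) w i = 0 by rewrite w_sum; apply/eqP; rewrite oner_eq0.
apply: big1 => i _; apply/eqP; move/eqP: (wf0 i isT).
by rewrite mulf_eq0 (gt_eqF (f_gt0 i)) orbF.
Qed.

End Orientation.

Lemma exists_min_in (T : eqType) (lt : rel T) (s : seq T) :
  s != [::] -> {in s & &, transitive lt} ->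
  {in s &, forall x y, x != y -> lt x y || lt y x} ->
  exists2 m, m \in s & {in s, forall y, y != m -> lt m y}.
Proof.
move=> s0 lt_tr lt_tot; pose le x y := (x == y) || lt x y.
have le_tot : {in s &, total le}.
  move=> x y xs ys; rewrite /le eq_sym; case: eqVneq => [//|xy /=].
  by apply: lt_tot; rewrite // eq_sym.
have le_tr : {in s & &, transitive le}.
  move=> y x z ys xs zs /predU1P[->|xy] /predU1P[<-|yz];
    rewrite /le ?eqxx ?xy ?yz ?orbT //.
  by rewrite (lt_tr y x z) ?orbT.
have srt := sort_sorted_in le_tot (allss s).
have mem_srt := mem_sort le s.
case E: (sort le s) srt mem_srt => [|m r] srt mem_srt.
  by move: s0; have := size_sort le s; rewrite E; case: (s).
have ms : m \in s by rewrite -mem_srt mem_head.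
have /allP m_le : all (le m) r.
  apply: (order_path_min_in le_tr) srt; apply/allP => y; by rewrite mem_srt.
exists m => // y ys ym.
have /m_le : y \in r by move: ys; rewrite -mem_srt inE (negbTE ym).
by rewrite /le eq_sym (negbTE ym).
Qed.

Lemma exists_orient_min (R : realFieldType) (s : R) (c d : pt R) (P : seq (pt R)) :
  P != [::] -> {in P, forall x, 0 < s * orient c d x} ->
  {in P &, forall x y, x != y -> orient c x y != 0} ->
  exists2 m, m \in P & {in P, forall y, y != m -> 0 < orient c m y}.
Proof.
move=> P0 side gp; apply: exists_min_in => // [y x z yP xP zP|x y xP yP xy].
  exact: (orient_trans (side x xP) (side y yP) (side z zP)).
by rewrite orient_swap23 oppr_gt0 -neq_lt gp // eq_sym.
Qed.

Lemma exists_orient_max (R : realFieldType) (s : R) (c d : pt R) (P : seq (pt R)) :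
  P != [::] -> {in P, forall x, 0 < s * orient c d x} ->
  {in P &, forall x y, x != y -> orient c x y != 0} ->
  exists2 m, m \in P & {in P, forall y, y != m -> 0 < orient c y m}.
Proof.
move=> P0 side gp; apply: exists_min_in => // [y x z yP xP zP yx zy|x y xP yP xy].
  exact: (orient_trans (side z zP) (side y yP) (side x xP) zy yx).
by rewrite orient_swap23 oppr_gt0 -neq_lt gp.
Qed.

Lemma perm_eq_triple (T : eqType) (s : seq T) a c :
  uniq s -> size s = 3%N -> a \in s -> c \in s -> a != c ->
  exists y, perm_eq s [:: a; c; y].
Proof.
move=> s_uniq s3 a_s c_s ac.
have c_rem : c \in rem a s by rewrite mem_rem_uniq // inE eq_sym ac.
have := size_rem c_rem; rewrite (size_rem a_s) s3.
case E: (rem c (rem a s)) => [|y []] // _; exists y.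
apply: (perm_trans (perm_to_rem a_s)); rewrite perm_cons -E.
exact: perm_to_rem.
Qed.

Lemma uniq_count_eq2 (T : eqType) (P : pred T) (s : seq T) :
  uniq s -> count P s = 2%N ->
  exists r1 r2, [/\ r1 \in s, r2 \in s, r1 != r2, P r1 & P r2] /\
    {in s, forall x, P x -> x = r1 \/ x = r2}.
Proof.
move=> s_uniq; rewrite -size_filter.
have mem_f x : (x \in filter P s) = P x && (x \in s) by rewrite mem_filter.
case E: (filter P s) (filter_uniq P s_uniq) mem_f => [|r1 [|r2 [|]]] //= /andP[].
rewrite inE => r12 _ mem_f _.
have /andP[P1 s1] : P r1 && (r1 \in s) by rewrite -mem_f !inE eqxx.
have /andP[P2 s2] : P r2 && (r2 \in s) by rewrite -mem_f !inE eqxx orbT.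
exists r1, r2; split => // x xs Px.
by move: (mem_f x); rewrite Px xs !inE => /orP[] /eqP; [left|right].
Qed.

Lemma halfplane_two_red_no_blue_swap (R : realFieldType) (Rs Bs : seq (pt R)) u v :
  halfplane_two_red_no_blue Rs Bs u v (-1) -> halfplane_two_red_no_blue Rs Bs v u 1.
Proof.
have E p : (0 < -1 * orient u v p) = (0 < 1 * orient v u p).
  by rewrite mulN1r mul1r orient_swap12 opprK.
case=> cnt noB; split=> [|p /noB]; last by rewrite E.
by rewrite -cnt; apply: eq_count => p; rewrite E.
Qed.

Definition convex_4hole (R : realFieldType) (S : seq (pt R)) a b c d :=
  convex_quad a b c d /\ forall x, x \in S -> ~ in_quad_interior a b c d x.

Lemma convex_4hole_rot (R : realFieldType) (S : seq (pt R)) a b c d :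
  convex_4hole S a b c d -> convex_4hole S b c d a.
Proof.
case=> [[abc [bcd [cda dab]]] empty]; split=> [//|x xS [bcx [cdx [dax abx]]]].
exact: (empty x xS).
Qed.

Section RedBlue.
Variable R : realFieldType.
Variables Rs Bs : seq (pt R).
Hypothesis Rs_uniq : uniq Rs.
Hypothesis Bs_uniq : uniq Bs.
Hypothesis Rs_size : size Rs = 3%N.
Hypothesis Bs_size : (2 <= size Bs)%N.
Hypothesis RB_disjoint : forall p, p \in Rs -> p \notin Bs.
Hypothesis S_gp : general_position (Rs ++ Bs).
Hypothesis hull_BR : forall x, in_hull Bs x -> in_hull Rs x.

Local Notation S := (Rs ++ Bs).

Lemma red_in_S p : p \in Rs -> p \in S.
Proof. by rewrite mem_cat => ->. Qed.

Lemma blue_in_S p : p \in Bs -> p \in S.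
Proof. by rewrite mem_cat orbC => ->. Qed.

Lemma red_neq_blue p q : p \in Rs -> q \in Bs -> p != q.
Proof. by move=> pR; apply: contraTneq => <-; apply: RB_disjoint. Qed.

Lemma blue_neq_red p q : p \in Bs -> q \in Rs -> p != q.
Proof. by move=> pB qR; rewrite eq_sym red_neq_blue. Qed.

Lemma blue_in_red_hull b : b \in Bs -> in_hull Rs b.
Proof. by move=> bB; apply/hull_BR/in_hull_mem. Qed.

Lemma reds_one_side a c : a \in Rs -> c \in Rs -> a != c ->
  {in Rs, forall z, 0 <= orient a c z} \/ {in Rs, forall z, 0 <= orient c a z}.
Proof.
move=> aR cR ac; have [y /perm_mem Rs_acy] := perm_eq_triple Rs_uniq Rs_size aR cR ac.
case: (leP 0 (orient a c y)) => [y_ge0|y_lt0]; [left|right] => z;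
  rewrite Rs_acy !inE => /or3P[] /eqP->; rewrite ?orient_aba ?orient_abb //.
by rewrite orient_swap12 oppr_ge0 ltW.
Qed.

Lemma blues_left_of_red_line a c b0 : a \in Rs -> c \in Rs -> b0 \in Bs ->
  0 < orient a c b0 -> {in Bs, forall b, 0 < orient a c b}.
Proof.
move=> aR cR b0B b0_gt0.
have ac : a != c by apply: contraTneq b0_gt0 => ->; rewrite orient_aab ltxx.
case: (reds_one_side aR cR ac) => side.
  move=> b bB; rewrite lt_def (in_hull_orient_ge0 (blue_in_red_hull bB) side) andbT.
  exact: S_gp (red_in_S aR) (red_in_S cR) (blue_in_S bB) ac
    (red_neq_blue cR bB) (red_neq_blue aR bB).
have := in_hull_orient_ge0 (blue_in_red_hull b0B) side.
by rewrite orient_swap12 oppr_ge0 leNgt b0_gt0.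
Qed.

Lemma count_reds_eq2 (P : pred (pt R)) r1 r2 y :
  r1 \in Rs -> r2 \in Rs -> r1 != r2 -> P r1 -> P r2 -> y \in Rs -> ~~ P y ->
  count P Rs = 2%N.
Proof.
move=> r1R r2R r12 P1 P2 yR Py.
have [z Rs_perm] := perm_eq_triple Rs_uniq Rs_size r1R r2R r12.
have : y \in [:: r1; r2; z] by rewrite -(perm_mem Rs_perm).
rewrite (permP Rs_perm) /= P1 P2 !inE.
by case/or3P=> /eqP yE; move: Py; rewrite yE ?P1 ?P2 // => /negbTE->.
Qed.

Lemma hull_edge_halfplane t v r1 r2 :
  t \in Bs -> v \in Bs -> t != v ->
  {in Bs, forall b, b != t -> b != v -> orient t v b < 0} ->
  r1 \in Rs -> r2 \in Rs -> r1 != r2 -> 0 < orient t v r1 -> 0 < orient t v r2 ->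
  hull_edge Bs t v /\ halfplane_two_red_no_blue Rs Bs t v 1.
Proof.
move=> tB vB tv edge r1R r2R r12 r1_gt0 r2_gt0; split; first by split=> //; right.
have [y yR y_le0] : exists2 y, y \in Rs & ~~ (0 < orient t v y).
  apply/allPn; apply: contraT => /negbNE/allP Rs_gt0.
  by have := in_hull_orient_gt0 (blue_in_red_hull tB) Rs_gt0; rewrite orient_aba ltxx.
split=> [|b bB].
  under eq_count do rewrite mul1r.
  exact: count_reds_eq2 r1R r2R r12 r1_gt0 r2_gt0 yR y_le0.
apply/negP; rewrite mul1r -leNgt.
have [->|bt] := eqVneq b t; first by rewrite orient_aba.
have [->|bv] := eqVneq b v; first by rewrite orient_abb.
exact/ltW/edge.
Qed.

Lemma exists_next_hull_vertex q t : t \in Bs ->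
  {in Bs, forall b, b != t -> 0 < orient q t b} ->
  exists2 v, (v \in Bs) && (v != t) &
    {in Bs, forall b, b != t -> b != v -> orient t v b < 0}.
Proof.
move=> tB side.
have mem_P x : (x \in rem t Bs) = (x != t) && (x \in Bs) by rewrite mem_rem_uniq.
have P0 : rem t Bs != [::].
  by rewrite -size_eq0 size_rem // -lt0n -ltnS prednK ?(leq_trans _ Bs_size).
have side' : {in rem t Bs, forall x, 0 < -1 * orient t q x}.
  by move=> x; rewrite mem_P mulN1r -orient_swap12 => /andP[xt /side]; apply.
have gp' : {in rem t Bs &, forall x y, x != y -> orient t x y != 0}.
  move=> x y; rewrite !mem_P => /andP[xt xB] /andP[yt yB] xy.
  by apply: S_gp; rewrite ?blue_in_S // eq_sym.
have [v] := exists_orient_max P0 side' gp'; rewrite mem_P => vP vmax.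
exists v; first by rewrite andbC.
move=> b bB bt bv; rewrite orient_swap23 oppr_lt0; apply: vmax bv.
by rewrite mem_P bt.
Qed.

Lemma hole_RRBB_hull_edge r1 r2 b1 b2 :
  r1 \in Rs -> r2 \in Rs -> b1 \in Bs -> b2 \in Bs -> convex_4hole S r1 r2 b1 b2 ->
  exists u v, hull_edge Bs u v /\ halfplane_two_red_no_blue Rs Bs u v 1.
Proof.
move=> r1R r2R b1B b2B [quad empty]; case: (quad) => r12b1 [r2b12 [b12r1 _]].
have r12 : r1 != r2 by apply: contraTneq r12b1 => ->; rewrite orient_aab ltxx.
have b12 : b1 != b2 by apply: contraTneq r2b12 => ->; rewrite orient_abb ltxx.
have left_r12 := blues_left_of_red_line r1R r2R b1B r12b1.
have [t tB tmin] : exists2 t, t \in Bs & {in Bs, forall b, b != t -> 0 < orient r1 t b}.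
  apply: (exists_orient_min (s := 1) (d := r2)) => [|b|x y xB yB xy].
  - by apply: contraTneq b1B => ->.
  - by rewrite mul1r => /left_r12.
  - exact: S_gp (red_in_S r1R) (blue_in_S xB) (blue_in_S yB)
      (red_neq_blue r1R xB) xy (red_neq_blue r1R yB).
have [v /andP[vB vt] edge] := exists_next_hull_vertex tB tmin.
have tv_r1 : 0 < orient t v r1 by rewrite -orient_cycle tmin.
have tv : t != v by rewrite eq_sym.
have := S_gp (blue_in_S tB) (blue_in_S vB) (red_in_S r2R) tv
  (blue_neq_red vB r2R) (blue_neq_red tB r2R).
rewrite neq_lt => /orP[tv_r2|]; last first.
  by move=> tv_r2; exists t, v; apply: (hull_edge_halfplane (r1 := r1) (r2 := r2)).
have cone b : b \in Bs -> b != t -> orient r2 t b < 0.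
  move=> bB bt; rewrite orient_cycle -(pmulr_rlt0 _ tv_r1) orient_plucker subr_lt0.
  apply: (le_lt_trans (y := 0)).
    apply: mulr_le0_ge0; last by rewrite orient_cycle ltW ?left_r12.
    by have [->|bv] := eqVneq b v; [rewrite orient_abb | rewrite ltW ?edge].
  by rewrite nmulr_rgt0 // orient_swap12 oppr_lt0; apply: tmin.
have tb1 : t != b1.
  apply: contraTneq r2b12 => tE; rewrite -leNgt -tE ltW ?cone //.
  by rewrite tE eq_sym.
have tb2 : t != b2.
  apply: contraTneq b12r1 => tE; rewrite -leNgt -orient_cycle -tE.
  by rewrite orient_swap23 oppr_le0; apply/ltW/tmin; rewrite // tE.
case: (empty t (blue_in_S tB)); apply: in_quad_interior_of_wedges => //.
- exact: left_r12.
- by apply: tmin; rewrite // eq_sym.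
- by apply: tmin; rewrite // eq_sym.
- by rewrite cone // eq_sym.
Qed.

Lemma no_red_diagonal a b c d :
  a \in Rs -> c \in Rs -> b \in Bs -> d \in Bs -> ~ convex_quad a b c d.
Proof.
move=> aR cR bB dB [abc [_ [cda _]]].
have acd : 0 < orient a c d by rewrite orient_cycle.
have := blues_left_of_red_line aR cR dB acd bB.
by rewrite orient_swap23 oppr_gt0 ltNge ltW.
Qed.

Lemma balanced_hole_hull_edge : has_balanced_convex_4hole Rs Bs ->
  exists u v, hull_edge Bs u v /\ halfplane_two_red_no_blue Rs Bs u v 1.
Proof.
case=> a [b [c [d [[aS bS cS dS] [abcd [nR [_ empty]]]]]]].
have H : convex_4hole S a b c d by [].
have blue x : x \in S -> x \in Rs = false -> x \in Bs.
  by rewrite mem_cat => /orP[->|].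
move: nR => /=.
case aR: (a \in Rs); case bR: (b \in Rs);
  case cR: (c \in Rs); case dR: (d \in Rs) => // _.
- exact: hole_RRBB_hull_edge aR bR (blue c cS cR) (blue d dS dR) H.
- by case: (no_red_diagonal aR cR (blue b bS bR) (blue d dS dR) abcd).
- exact: hole_RRBB_hull_edge dR aR (blue b bS bR) (blue c cS cR)
    (convex_4hole_rot (convex_4hole_rot (convex_4hole_rot H))).
- exact: hole_RRBB_hull_edge bR cR (blue d dS dR) (blue a aS aR) (convex_4hole_rot H).
- by case: (no_red_diagonal bR dR (blue c cS cR) (blue a aS aR) (convex_4hole_rot H).1).
- exact: hole_RRBB_hull_edge cR dR (blue a aS aR) (blue b bS bR)
    (convex_4hole_rot (convex_4hole_rot H)).
Qed.

Lemma hull_edge_balanced_hole u v : u \in Bs -> v \in Bs ->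
  halfplane_two_red_no_blue Rs Bs u v 1 -> has_balanced_convex_4hole Rs Bs.
Proof.
move=> uB vB [cnt noB].
have {}cnt : count (fun p => 0 < orient u v p) Rs = 2%N.
  by rewrite -cnt; apply: eq_count => p; rewrite mul1r.
have [r1 [r2 [[r1R r2R r12 uvr1 uvr2] only]]] := uniq_count_eq2 Rs_uniq cnt.
wlog vr12 : r1 r2 r1R r2R r12 uvr1 uvr2 only / 0 < orient v r1 r2.
  move=> hwlog; have := S_gp (blue_in_S vB) (red_in_S r1R) (red_in_S r2R)
    (blue_neq_red vB r1R) r12 (blue_neq_red vB r2R).
  rewrite neq_lt => /orP[vr21|]; last exact: hwlog.
  apply: (hwlog r2 r1) => //; first by rewrite eq_sym.
    by move=> x xR /(only x xR) [] ->; [right|left].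
  by rewrite orient_swap23 oppr_gt0.
have r12v : 0 < orient r1 r2 v by rewrite -orient_cycle.
have r12u := blues_left_of_red_line r1R r2R vB r12v uB.
exists u, v, r1, r2; split.
  by split; [exact: blue_in_S uB | exact: blue_in_S vB
             | exact: red_in_S r1R | exact: red_in_S r2R].
split; first by split=> //; split=> //; split=> //; rewrite orient_cycle.
have blue_not_red x : x \in Bs -> (x \in Rs) = false.
  by move=> xB; apply/negP => /RB_disjoint; rewrite xB.
rewrite /= (blue_not_red _ uB) (blue_not_red _ vB) r1R r2R uB vB.
rewrite (negbTE (RB_disjoint r1R)) (negbTE (RB_disjoint r2R)).
split=> //; split=> // x; rewrite mem_cat => /orP[xR|xB] [uvx [vr1x [r12x _]]].
  by case: (only x xR uvx) => xE; move: vr1x r12x; rewrite xE orient_abb ltxx.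
by apply: (noB x xB); rewrite mul1r.
Qed.

End RedBlue.

Theorem lemma6 (R : realFieldType) (Rs Bs : seq (pt R)) :
  uniq Rs -> uniq Bs -> (forall p, p \in Rs -> p \notin Bs) ->
  general_position (Rs ++ Bs) ->
  ~ lin_separable Rs Bs ->
  (forall x, in_hull Bs x -> in_hull Rs x) ->
  size Rs = 3%N -> (2 <= size Bs)%N ->
  has_balanced_convex_4hole Rs Bs <->
  exists u v, hull_edge Bs u v /\
    (halfplane_two_red_no_blue Rs Bs u v 1 \/
     halfplane_two_red_no_blue Rs Bs u v (-1)).
Proof.
move=> Rs_uniq Bs_uniq RB_disjoint S_gp _ hull_BR Rs_size Bs_size; split.
  case/(balanced_hole_hull_edge Rs_uniq Bs_uniq Rs_size Bs_size RB_disjoint S_gp hull_BR).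
  by move=> u [v [edge half]]; exists u, v; split=> //; left.
move=> [u [v [[uB vB _ _] [half|/halfplane_two_red_no_blue_swap half]]]].
  exact: (hull_edge_balanced_hole Rs_uniq Rs_size RB_disjoint S_gp hull_BR uB vB half).
exact: (hull_edge_balanced_hole Rs_uniq Rs_size RB_disjoint S_gp hull_BR vB uB half).
Qed.
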